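(* Consider the multicast coalitional game with player set $\mathcal{N}=\{1,\ldots,N\}$, $N\ge 2$, and value function $$v(S)=\sum_{i\in S}U_i-\sum_{i\in S}\frac{\alpha_i}{R_S}-\frac{\beta+\gamma}{R_S},\qquad R_S=\min_{i\in S}R_i,$$ for nonempty $S\subseteq\mathcal{N}$. Let $R_{min}=\min_iR_i$, $R_{max}=\max_iR_i$, $\alpha_{min}=\min_i\alpha_i$, $\alpha_{max}=\max_i\alpha_i$. If $$\frac{R_{max}}{R_{min}}\le\left(\frac{N}{N-1}\right)\left(\frac{\alpha_{min}(N-1)+\beta+\gamma}{\alpha_{max}N+\beta+\gamma}\right),$$ then the core is non-empty.
   Context: A transmitter multicasts a file of size $X>0$ bits to users $\mathcal{N}=\{1,\dots,N\}$. User $i$ has valuation $U_i\in\mathbb{R}$, downloads at rate $R_i>0$, and consumes receive power $P_{Rx,i}>0$; the transmitter transmits at power $P_{Tx}>0$. Costs per unit energy are $a>0$ at users and $b>0$ at the transmitter; bandwidth cost per second is $w>0$. Set $\alpha_i=aP_{Rx,i}X$, $\beta=bP_{Tx}X$, $\gamma=wX$. The core is the set of payoff vectors $(x_1,\dots,x_N)\in\mathbb{R}^N$ with $\sum_{i\in\mathcal{N}}x_i=v(\mathcal{N})$ and $\sum_{i\in S}x_i\ge v(S)$ for every nonempty $S\subseteq\mathcal{N}$. *)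

From HB Require Import structures.
From mathcomp Require Import all_boot all_order all_algebra.
Set Implicit Arguments. Unset Strict Implicit. Unset Printing Implicit Defensive.
Import Order.TTheory GRing.Theory Num.Theory.
Local Open Scope ring_scope.

Section Defs.
Variables (F : realFieldType) (N : nat).

(* minimum / maximum of f over a nonempty set S (0 if S is empty; never used then) *)
Definition setmin (S : {set 'I_N}) (f : 'I_N -> F) : F :=
  match [pick i in S] with
  | Some i0 => \big[Num.min/f i0]_(i in S) f i
  | None => 0
  end.

Definition setmax (S : {set 'I_N}) (f : 'I_N -> F) : F :=
  match [pick i in S] with
  | Some i0 => \big[Num.max/f i0]_(i in S) f i
  | None => 0
  end.

Definition multicast_value (U Rr alpha : 'I_N -> F) (beta gamma : F)
  (S : {set 'I_N}) : F :=
  \sum_(i in S) U i - \sum_(i in S) alpha i / setmin S Rr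
  - (beta + gamma) / setmin S Rr.

Definition in_core (v : {set 'I_N} -> F) (x : 'I_N -> F) : Prop :=
  \sum_(i in [set: 'I_N]) x i = v [set: 'I_N] /\
  forall S : {set 'I_N}, S != set0 -> v S <= \sum_(i in S) x i.

End Defs.

From HB Require Import structures.
From mathcomp Require Import all_boot all_order all_algebra.
From mathcomp Require Import ring lra.
Set Implicit Arguments. Unset Strict Implicit. Unset Printing Implicit Defensive.
Import Order.TTheory GRing.Theory Num.Theory.
Local Open Scope ring_scope.

(* Charge each user her own reception cost at the slowest rate R_min plus an
   equal share (beta + gamma) / (N R_min) of the transmission cost.  This is
   efficient, and a proper coalition S of s <= N - 1 users with total alpha A
   and bottleneck rate R_S >= R_min gains nothing by seceding iff
     A / R_min + s (beta + gamma) / (N R_min) <= (A + beta + gamma) / R_S.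
   The required bound on R_S / R_min is tightest at s = N - 1, A = s alpha_max,
   where it is exactly the hypothesis with alpha_max in place of alpha_min;
   the stated hypothesis, with alpha_min <= alpha_max, is stronger. *)

Section SetMinMax.
Variables (F : realFieldType) (N : nat).
Implicit Types (S : {set 'I_N}) (f : 'I_N -> F).

Lemma setmin_le S f i : i \in S -> setmin S f <= f i.
Proof.
move=> Si; rewrite /setmin; case: pickP => [i0 _|/(_ i)]; last by rewrite Si.
exact: bigmin_le_cond.
Qed.

Lemma setmax_ge S f i : i \in S -> f i <= setmax S f.
Proof.
move=> Si; rewrite /setmax; case: pickP => [i0 _|/(_ i)]; last by rewrite Si.
exact: le_bigmax_cond.
Qed.

Lemma setmin_attained f S : S != set0 -> exists2 i, i \in S & setmin S f = f i.
Proof.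
case/set0Pn=> i Si; rewrite /setmin; case: pickP => [i0 Si0|/(_ i)]; last by rewrite Si.
apply: (big_ind (fun y => exists2 j, j \in S & y = f j)) => [|y z|j Sj].
- by exists i0.
- by move=> [j Sj ->] [k Sk ->]; rewrite minEle; case: ifP; [exists j | exists k].
- by exists j.
Qed.

Lemma le_setmin S f c : S != set0 -> (forall i, i \in S -> c <= f i) -> c <= setmin S f.
Proof. by move=> S0; have [i Si ->] := setmin_attained f S0; apply. Qed.

Lemma setmin_gt0 S f : S != set0 -> (forall i, i \in S -> 0 < f i) -> 0 < setmin S f.
Proof. by move=> S0; have [i Si ->] := setmin_attained f S0; apply. Qed.

End SetMinMax.

Section CoalitionInequality.
Variable F : realFieldType.

Lemma coalition_cost_ineq (n c amax A s : F) :
  0 <= c -> 0 <= amax -> 0 <= s <= n - 1 -> 0 <= A <= s * amax ->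
  (amax * (n - 1) + c) * (n * A + s * c) <= (n - 1) * (amax * n + c) * (A + c).
Proof.
move=> c0 amax0 /andP[s0 sD] /andP[A0 As].
have amaxn0 : 0 <= amax * n by apply: mulr_ge0 => //; lra.
rewrite -subr_ge0.
(* Both terms of the defect vanish at the extreme coalition s = n - 1, A = s amax. *)
have -> : (n - 1) * (amax * n + c) * (A + c) - (amax * (n - 1) + c) * (n * A + s * c)
    = c * ((s * amax - A) + (amax * n + c) * (n - 1 - s)) by ring.
by apply: mulr_ge0 => //; apply: addr_ge0; [rewrite subr_ge0 | apply: mulr_ge0; lra].
Qed.

Lemma coalition_share_le (n c amax A s r m : F) :
  1 < n -> 0 < c -> 0 <= amax -> 0 <= s <= n - 1 -> 0 <= A <= s * amax ->
  0 < r -> 0 < m ->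
  m / r <= n / (n - 1) * ((amax * (n - 1) + c) / (amax * n + c)) ->
  A / r + s * c / (n * r) <= (A + c) / m.
Proof.
move=> n1 c0 amax0 /andP[s0 sD] /andP[A0 As] r0 m0 hmr.
have n0 : 0 < n by lra.
have D0 : 0 < n - 1 by lra.
have den0 : 0 < amax * n + c by apply: ltr_wpDl => //; apply: mulr_ge0 => //; lra.
have L0 : 0 <= A + s * c / n by rewrite addr_ge0 // divr_ge0 ?mulr_ge0 // ltW.
have -> : A / r + s * c / (n * r) = (A + s * c / n) * (m / r) / m.
  by field; rewrite !gt_eqF.
rewrite ler_pM2r ?invr_gt0 //.
apply: le_trans (ler_wpM2l L0 hmr) _.
have -> : (A + s * c / n) * (n / (n - 1) * ((amax * (n - 1) + c) / (amax * n + c)))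
    = (amax * (n - 1) + c) * (n * A + s * c) / ((n - 1) * (amax * n + c)).
  by field; rewrite !gt_eqF.
rewrite ler_pdivrMr; last exact: mulr_gt0.
by rewrite [leRHS]mulrC; apply: coalition_cost_ineq; rewrite ?(ltW c0) ?s0 ?sD ?A0 ?As.
Qed.

End CoalitionInequality.

Section MulticastCore.
Variables (F : realFieldType) (N : nat) (U Rr alpha : 'I_N -> F) (beta gamma : F).
Hypotheses (hN : (2 <= N)%N) (hR : forall i, 0 < Rr i)
  (halpha : forall i, 0 <= alpha i) (hc : 0 < beta + gamma).

Local Notation v := (multicast_value U Rr alpha beta gamma).
Local Notation Rmin := (setmin [set: 'I_N] Rr).
Local Notation Rmax := (setmax [set: 'I_N] Rr).
Local Notation amax := (setmax [set: 'I_N] alpha).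

Definition equal_share_allocation (i : 'I_N) : F :=
  U i - alpha i / Rmin - (beta + gamma) / (N%:R * Rmin).

Local Notation x := equal_share_allocation.

Lemma players_neq0 : [set: 'I_N] != set0.
Proof. by apply/set0Pn; exists (Ordinal (ltnW hN)). Qed.

Lemma Rmin_gt0 : 0 < Rmin.
Proof. exact: setmin_gt0 players_neq0 (fun i _ => hR i). Qed.

Lemma sum_equal_share (S : {set 'I_N}) :
  \sum_(i in S) x i = \sum_(i in S) U i - (\sum_(i in S) alpha i) / Rmin
                      - #|S|%:R * (beta + gamma) / (N%:R * Rmin).
Proof.
by rewrite !sumrB sumr_const mulr_suml -mulrA; congr (_ - _); rewrite [RHS]mulr_natl.
Qed.

Lemma equal_share_efficient : \sum_(i in [set: 'I_N]) x i = v [set: 'I_N].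
Proof.
have N0 : (N%:R : F) != 0 by rewrite pnatr_eq0 -lt0n (ltnW hN).
rewrite sum_equal_share /multicast_value mulr_suml cardsT card_ord.
by congr (_ - _); field; rewrite N0 gt_eqF ?Rmin_gt0.
Qed.

Hypothesis hratio :
  Rmax / Rmin <= (N%:R / (N - 1)%:R) *
                 ((amax * (N - 1)%:R + (beta + gamma)) / (amax * N%:R + (beta + gamma))).

Lemma equal_share_stable (S : {set 'I_N}) : S != set0 -> v S <= \sum_(i in S) x i.
Proof.
move=> S0; have [-> | ST] := eqVneq S [set: 'I_N]; first by rewrite equal_share_efficient.
have N1 : (1 <= N)%N := ltnW hN.
set m := setmin S Rr; set A := \sum_(i in S) alpha i; set s := (#|S|%:R : F).
have m0 : 0 < m := setmin_gt0 S0 (fun i _ => hR i).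
have Rmin_le_m : Rmin <= m.
  by apply: le_setmin S0 _ => i _; apply: setmin_le; rewrite in_setT.
have m_le_Rmax : m <= Rmax.
  by rewrite /m; have [i Si ->] := setmin_attained Rr S0; apply: setmax_ge; rewrite in_setT.
have s_le : s <= N%:R - 1.
  rewrite lerBrDr natr1 ler_nat -[X in (_ <= X)%N](card_ord N) -cardsT.
  by apply: proper_card; rewrite properT.
have A_le : A <= s * amax.
  by rewrite /A /s mulr_natl -sumr_const ler_sum // => i _; apply: setmax_ge; rewrite in_setT.
have amax0 : 0 <= amax.
  by apply: le_trans (halpha (Ordinal N1)) _; apply: setmax_ge; rewrite in_setT.
have hmr : m / Rmin <= N%:R / (N%:R - 1) *
    ((amax * (N%:R - 1) + (beta + gamma)) / (amax * N%:R + (beta + gamma))).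
  have -> : (N%:R - 1 : F) = (N - 1)%:R by rewrite natrB.
  by apply: le_trans hratio; rewrite ler_pM2r ?invr_gt0 ?Rmin_gt0.
rewrite sum_equal_share /multicast_value -/m -/A -mulr_suml -!addrA lerD2l -!opprD lerN2.
rewrite -mulrDl; apply: (coalition_share_le _ hc amax0 _ _ Rmin_gt0 m0 hmr).
- by rewrite ltr1n.
- by rewrite ler0n s_le.
- by rewrite A_le sumr_ge0.
Qed.

Lemma equal_share_in_core : in_core v x.
Proof. by split; [exact: equal_share_efficient | exact: equal_share_stable]. Qed.

End MulticastCore.

Theorem theorem4 (F : realFieldType) (N : nat) (hN : (2 <= N)%N)
  (X a b w PTx : F) (U Rr PRx : 'I_N -> F)
  (hX : 0 < X) (ha : 0 < a) (hb : 0 < b) (hw : 0 < w) (hPTx : 0 < PTx)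
  (hR : forall i, 0 < Rr i) (hPRx : forall i, 0 < PRx i) :
  let alpha := fun i => a * PRx i * X in
  let beta := b * PTx * X in
  let gamma := w * X in
  let Rmin := setmin [set: 'I_N] Rr in
  let Rmax := setmax [set: 'I_N] Rr in
  let amin := setmin [set: 'I_N] alpha in
  let amax := setmax [set: 'I_N] alpha in
  Rmax / Rmin <= (N%:R / (N - 1)%:R) *
                 ((amin * (N - 1)%:R + beta + gamma) / (amax * N%:R + beta + gamma)) ->
  exists x : 'I_N -> F, in_core (multicast_value U Rr alpha beta gamma) x.
Proof.
move=> alpha beta gamma Rmin Rmax amin amax hratio.
have alpha_gt0 i : 0 < alpha i by rewrite !mulr_gt0.
have c_gt0 : 0 < beta + gamma by rewrite addr_gt0 ?mulr_gt0.
have i0 : 'I_N := Ordinal (ltnW hN).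
have alpha_le_amax i : alpha i <= amax by apply: setmax_ge; rewrite in_setT.
have amin_le_amax : amin <= amax.
  by apply: le_trans (alpha_le_amax i0); apply: setmin_le; rewrite in_setT.
have amax_ge0 : 0 <= amax := le_trans (ltW (alpha_gt0 i0)) (alpha_le_amax i0).
exists (equal_share_allocation U Rr alpha beta gamma).
apply: equal_share_in_core => // [i|]; first exact: ltW.
apply: le_trans hratio _; rewrite -!addrA ler_wpM2l ?divr_ge0 // ler_wpM2r ?invr_ge0 //.
  by rewrite addr_ge0 ?mulr_ge0 // ltW.
by rewrite lerD2r; apply: ler_wpM2r.
Qed.
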